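(* Let $H$ be a simple undirected graph on vertex set $[n]$, let $\{u_i\}_{i=1}^n$ and $\{w_j\}_{j=1}^n$ be two orthonormal families in $\mathbb{C}^d$, let $\{e_i\}$ be the standard basis of $\mathbb{C}^n$, and let $K=\sum_{i=1}^n |e_i\rangle\langle u_i\otimes w_i|$. If $\rho\in\mathcal{F}_H$ is separable, then $Z_K(\rho)=K\rho K^*\in\operatorname{R}_1[\mathcal{M}_n^+(H)]$.
   Context: A bipartite PSD $\rho$ on $\mathbb{C}^d\otimes\mathbb{C}^d$ is separable if $\rho=\sum_k|v_k\rangle\langle v_k|\otimes|x_k\rangle\langle x_k|$ for finitely many vectors. For an $n\times n$ matrix $X$, $G(X)$ is the undirected graph on $[n]$ with edge set $\{\{i,j\}: i\ne j,\ X_{ij}X_{ji}\neq 0\}$. $\mathcal{M}_n^+(H)$ is the cone of $n\times n$ PSD matrices $X$ with $G(X)\subseteq H$. $D(\rho)_{ij}=\langle u_i\otimes w_j|\rho|u_i\otimes w_j\rangle$ and $\mathcal{F}_H=\{\rho\in(\mathcal{M}_d\otimes\mathcal{M}_d)^+: G(D(\rho))\subseteq H\}$. For a cone $\mathcal{C}\subseteq\mathcal{M}_n^+$, $\operatorname{R}_1[\mathcal{C}]$ is the convex cone generated by the rank-1 matrices belonging to $\mathcal{C}$. *)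

(* Complex scalars: an arbitrary numClosedFieldType C
   (e.g. complex R for R : realType). *)
From HB Require Import structures.
From mathcomp Require Import all_boot all_order all_algebra.
From mathcomp Require Import mxtens.
Set Implicit Arguments. Unset Strict Implicit. Unset Printing Implicit Defensive.
Import Order.TTheory GRing.Theory Num.Theory.
Local Open Scope ring_scope.

Section Defs.
Variable C : numClosedFieldType.

Definition ctmx m n (A : 'M[C]_(m, n)) : 'M[C]_(n, m) := (map_mx Num.conj A)^T.

(* positive semidefinite: <x|A|x> >= 0 for all x (over C this forces A Hermitian) *)
Definition psdmx n (A : 'M[C]_n) : Prop :=
  forall x : 'cV[C]_n, 0 <= (ctmx x *m A *m x) 0 0.

Definition ketbra m n (u : 'cV[C]_m) (v : 'cV[C]_n) : 'M[C]_(m, n) := u *m ctmx v.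

Definition tensv d (u w : 'cV[C]_d) : 'cV[C]_(d * d) := u *t w.

Definition separable d (rho : 'M[C]_(d * d)) : Prop :=
  exists (m : nat) (v x : 'I_m -> 'cV[C]_d),
    rho = \sum_(k < m) (ketbra (v k) (v k) *t ketbra (x k) (x k)).

(* G(X) is a subgraph of H: for i <> j, X_ij X_ji <> 0 implies {i,j} edge of H *)
Definition graph_sub n (X : 'M[C]_n) (H : rel 'I_n) : Prop :=
  forall i j : 'I_n, i != j -> X i j * X j i != 0 -> H i j.

Definition simple_graph n (H : rel 'I_n) : Prop :=
  irreflexive H /\ symmetric H.

Definition Mplus n (H : rel 'I_n) (X : 'M[C]_n) : Prop :=
  psdmx X /\ graph_sub X H.

Definition R1 n (cone : 'M[C]_n -> Prop) (X : 'M[C]_n) : Prop :=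
  exists (m : nat) (c : 'I_m -> C) (Y : 'I_m -> 'M[C]_n),
    (forall k, 0 <= c k) /\ (forall k, \rank (Y k) = 1%N) /\ (forall k, cone (Y k)) /\
    X = \sum_(k < m) c k *: Y k.

Definition Dmx n d (u w : 'I_n -> 'cV[C]_d) (rho : 'M[C]_(d * d)) : 'M[C]_n :=
  \matrix_(i, j) (ctmx (tensv (u i) (w j)) *m rho *m tensv (u i) (w j)) 0 0.

Definition FH n d (H : rel 'I_n) (u w : 'I_n -> 'cV[C]_d) (rho : 'M[C]_(d * d)) : Prop :=
  psdmx rho /\ graph_sub (Dmx u w rho) H.

Definition orthonormal_fam n d (u : 'I_n -> 'cV[C]_d) : Prop :=
  forall i j, (ctmx (u i) *m u j) 0 0 = (i == j)%:R.

Definition stdbasis n (i : 'I_n) : 'cV[C]_n := delta_mx i 0.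

Definition Kmx n d (u w : 'I_n -> 'cV[C]_d) : 'M[C]_(n, d * d) :=
  \sum_(i < n) ketbra (stdbasis i) (tensv (u i) (w i)).

Definition ZK n d (K : 'M[C]_(n, d * d)) (rho : 'M[C]_(d * d)) : 'M[C]_n :=
  K *m rho *m ctmx K.
End Defs.

(* Writing rho = sum_k |v_k><v_k| (x) |x_k><x_k|, the matrix K rho K^* is the sum of the rank-one
   matrices |a_k><a_k| with a_k = K (v_k (x) x_k), whose i-th entry is <u_i|v_k> <w_i|x_k>.
   D(rho)_ij = sum_k |<u_i|v_k>|^2 |<w_j|x_k>|^2 is a sum of nonnegative terms, so if a_k has
   nonzero entries i and j then D(rho)_ij and D(rho)_ji are both nonzero, and {i,j} is an edge of H.
   Hence every |a_k><a_k| lies in M_n^+(H). *)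
From HB Require Import structures.
From mathcomp Require Import all_boot all_order all_algebra.
From mathcomp Require Import mxtens.
Set Implicit Arguments. Unset Strict Implicit. Unset Printing Implicit Defensive.
Import Order.TTheory GRing.Theory Num.Theory.
Local Open Scope ring_scope.

Section SeparableCompression.
Variable C : numClosedFieldType.

Definition braket k (y v : 'cV[C]_k) : C := (ctmx y *m v) 0 0.

Lemma ctmxM m n p (A : 'M[C]_(m, n)) (B : 'M[C]_(n, p)) :
  ctmx (A *m B) = ctmx B *m ctmx A.
Proof. by rewrite /ctmx map_mxM trmx_mul. Qed.

Lemma ctmxK m n (A : 'M[C]_(m, n)) : ctmx (ctmx A) = A.
Proof. by apply/matrixP => i j; rewrite !mxE conjCK. Qed.

Lemma ctmx_tensv k l (y : 'cV[C]_k) (z : 'cV[C]_l) :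
  ctmx (y *t z : 'cV_(k * l)) = (ctmx y *t ctmx z : 'rV_(k * l)).
Proof. by apply/matrixP => i j; rewrite !mxE rmorphM. Qed.

Lemma ketbraE m n (y : 'cV[C]_m) (v : 'cV[C]_n) i j :
  ketbra y v i j = y i 0 * (v j 0)^*.
Proof. by rewrite mxE big_ord1 !mxE. Qed.

Lemma ketbra_tens m n p q (y : 'cV[C]_m) (v : 'cV[C]_n) (z : 'cV[C]_p) (t : 'cV[C]_q) :
  ketbra y v *t ketbra z t = ketbra (y *t z) (v *t t).
Proof. by rewrite /ketbra ctmx_tensv (tensmx_mul y z (ctmx v) (ctmx t)). Qed.

Lemma braket_tens k l (y v : 'cV[C]_k) (z t : 'cV[C]_l) :
  braket (y *t z) (v *t t) = braket y v * braket z t.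
Proof.
rewrite /braket ctmx_tensv (tensmx_mul (ctmx y) (ctmx z) v t) mxE.
by case: mxtens_unindex => i j; rewrite (ord1 i) (ord1 j).
Qed.

Lemma braket_conj k (y v : 'cV[C]_k) : (braket y v)^* = braket v y.
Proof. by rewrite /braket -[y in RHS]ctmxK -ctmxM !mxE. Qed.

Lemma braket_ketbra k (y v : 'cV[C]_k) :
  (ctmx y *m ketbra v v *m y) 0 0 = braket y v * (braket y v)^*.
Proof. by rewrite braket_conj /ketbra !mulmxA -mulmxA mxE big_ord1. Qed.

Lemma ketbra_mul m n (y : 'cV[C]_m) (v s : 'cV[C]_n) : ketbra y v *m s = braket v s *: y.
Proof. by rewrite /ketbra -mulmxA [ctmx v *m s]mx11_scalar mul_mx_scalar. Qed.

Lemma mulmx_sum_ketbra m n p (A : 'M[C]_(m, n)) (b : 'I_p -> 'cV[C]_n) :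
  A *m (\sum_(k < p) ketbra (b k) (b k)) *m ctmx A =
  \sum_(k < p) ketbra (A *m b k) (A *m b k).
Proof.
rewrite mulmx_sumr mulmx_suml; apply: eq_bigr => k _.
by rewrite /ketbra ctmxM !mulmxA.
Qed.

Lemma psdmx_ketbra n (b : 'cV[C]_n) : psdmx (ketbra b b).
Proof. by move=> y; rewrite braket_ketbra mul_conjC_ge0. Qed.

Lemma rank_ketbra n (b : 'cV[C]_n) : b != 0 -> \rank (ketbra b b) = 1%N.
Proof.
move=> b_neq0; apply/eqP; rewrite eqn_leq; apply/andP; split.
  exact: leq_trans (mxrankM_maxl _ _) (rank_leq_col _).
rewrite lt0n mxrank_eq0; apply: contra b_neq0 => /eqP bb0.
apply/eqP/matrixP => i j; rewrite (ord1 j) [RHS]mxE.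
have /eqP := congr1 (fun M : 'M[C]_n => M i i) bb0.
by rewrite ketbraE mxE mul_conjC_eq0 => /eqP.
Qed.

Lemma graph_sub_ketbra n (H : rel 'I_n) (b : 'cV[C]_n) :
  (forall i j, i != j -> b i 0 != 0 -> b j 0 != 0 -> H i j) ->
  graph_sub (ketbra b b) H.
Proof.
move=> Hb i j ij; rewrite !ketbraE !mulf_eq0 !conjC_eq0 !negb_or.
by case/andP=> /andP[bi bj] _; apply: Hb.
Qed.

Lemma Mplus_ketbra n (H : rel 'I_n) (b : 'cV[C]_n) :
  graph_sub (ketbra b b) H -> Mplus H (ketbra b b).
Proof. by split; first exact: psdmx_ketbra. Qed.

Lemma R1_ketbra n (P : 'M[C]_n -> Prop) (b : 'cV[C]_n) :
  b != 0 -> P (ketbra b b) -> R1 P (ketbra b b).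
Proof.
move=> b_neq0 Pb; exists 1%N, (fun=> 1), (fun=> ketbra b b).
split=> [_|]; first exact: ler01.
split=> [_|]; first exact: rank_ketbra.
by split=> [_ //|]; rewrite big_ord1 scale1r.
Qed.

Lemma R1_0 n (P : 'M[C]_n -> Prop) : R1 P 0.
Proof.
exists 0%N, (fun=> 0), (fun=> 0); rewrite big_ord0.
by split; [case | split; [case | split; [case |]]].
Qed.

Lemma R1D n (P : 'M[C]_n -> Prop) X Y : R1 P X -> R1 P Y -> R1 P (X + Y).
Proof.
move=> [m [c [Z [c_ge0 [rZ [PZ ->]]]]]] [m' [c' [Z' [c'_ge0 [rZ' [PZ' ->]]]]]].
pose pick T (f : 'I_m -> T) (f' : 'I_m' -> T) k := sum_rect (fun=> T) f f' (split k).
exists (m + m')%N, (pick _ c c'), (pick _ Z Z').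
split=> [k|]; first by rewrite /pick; case: (split k).
split=> [k|]; first by rewrite /pick; case: (split k).
split=> [k|]; first by rewrite /pick; case: (split k).
rewrite big_split_ord; congr (_ + _); apply: eq_bigr => k _.
  by rewrite /pick (unsplitK (inl k : 'I_m + 'I_m')).
by rewrite /pick (unsplitK (inr k : 'I_m + 'I_m')).
Qed.

Lemma R1_sum_ketbra n (P : 'M[C]_n -> Prop) m (a : 'I_m -> 'cV[C]_n) :
  (forall k, a k != 0 -> P (ketbra (a k) (a k))) ->
  R1 P (\sum_(k < m) ketbra (a k) (a k)).
Proof.
move=> Pa; apply: big_ind => [|X Y|k _]; [exact: R1_0 | exact: R1D |].
have [->|ak_neq0] := eqVneq (a k) 0; last exact: R1_ketbra (Pa k ak_neq0).
by rewrite /ketbra mul0mx; apply: R1_0.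
Qed.

Section SeparableState.
Variables (n d m : nat) (u w : 'I_n -> 'cV[C]_d) (v x : 'I_m -> 'cV[C]_d).

Lemma Kmx_tensv (y z : 'cV[C]_d) i :
  (Kmx u w *m tensv y z) i 0 = braket (u i) y * braket (w i) z.
Proof.
rewrite /Kmx mulmx_suml summxE (bigD1 i) //= big1 => [|l li].
  by rewrite addr0 ketbra_mul braket_tens !mxE !eqxx mulr1.
by rewrite ketbra_mul !mxE eq_sym (negbTE li) mulr0.
Qed.

Lemma Dmx_separable i j :
  Dmx u w (\sum_(k < m) ketbra (v k) (v k) *t ketbra (x k) (x k)) i j =
  \sum_(k < m) (braket (u i) (v k) * (braket (u i) (v k))^* *
                (braket (w j) (x k) * (braket (w j) (x k))^*)).
Proof.
rewrite mxE mulmx_sumr mulmx_suml summxE; apply: eq_bigr => k _.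
by rewrite ketbra_tens braket_ketbra braket_tens rmorphM mulrACA.
Qed.

Lemma Dmx_separable_neq0 i j k :
  braket (u i) (v k) != 0 -> braket (w j) (x k) != 0 ->
  Dmx u w (\sum_(l < m) ketbra (v l) (v l) *t ketbra (x l) (x l)) i j != 0.
Proof.
move=> uv_neq0 wx_neq0; rewrite Dmx_separable psumr_neq0 => [|l _].
  by apply/hasP; exists k; rewrite ?mem_index_enum //= mulr_gt0 ?mul_conjC_gt0.
by rewrite mulr_ge0 ?mul_conjC_ge0.
Qed.

End SeparableState.

End SeparableCompression.

Theorem mainTheorem5 (C : numClosedFieldType) (n d : nat) (H : rel 'I_n)
    (u w : 'I_n -> 'cV[C]_d) (rho : 'M[C]_(d * d)) :
  simple_graph H -> orthonormal_fam u -> orthonormal_fam w ->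
  FH H u w rho -> separable rho ->
  R1 (Mplus H) (ZK (Kmx u w) rho).
Proof.
move=> _ _ _ [_ graphD] [m [v [x rhoE]]]; subst rho.
rewrite /ZK (eq_bigr _ (fun k _ => ketbra_tens (v k) (v k) (x k) (x k))).
rewrite mulmx_sum_ketbra; apply: R1_sum_ketbra => k _.
apply/Mplus_ketbra/graph_sub_ketbra => i j ij.
rewrite !Kmx_tensv !mulf_eq0 !negb_or => /andP[ui wi] /andP[uj wj].
apply: graphD ij _.
by rewrite mulf_neq0 ?(Dmx_separable_neq0 ui wj) ?(Dmx_separable_neq0 uj wi).
Qed.
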